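(* Let $m\ge1$, $\boldsymbol\gamma=(\gamma_1,\ldots,\gamma_m)\in\mathbb{N}^m$ and $f_1,\ldots,f_{m+1}$ arithmetic functions. For $1\le j\le m+1$ and fixed $n_1,\ldots,n_{j-1},n_{j+1},\ldots,n_{m+1}\in\mathbb{N}$ put \[ \Phi_j(s):=\sum_{n_j=1}^\infty S^{\boldsymbol\gamma}_{f_1,\ldots,f_{m+1}}(n_1,\ldots,n_{m+1})\,n_j^{-s}. \] (i) For $\Re(s)>\sigma(f_1)$, \[ \Phi_1(s)=L(s;f_1)\,F_1(n_2),\qquad F_1:=\delta^{-s}\bigl(G_2*_{\gamma_1}\delta^s\bigr),\quad G_2:=S^{(\gamma_2,\ldots,\gamma_m)}_{f_2,\ldots,f_{m+1}}(\,\cdot\,,n_3,\ldots,n_{m+1}), \] i.e. $F_1(n_2)=\sum_{d\in\mathbb{N},\,d^{\gamma_1}\mid n_2}G_2(d^{\gamma_1})\,d^{-\gamma_1 s}$. (ii) For $2\le j\le m+1$ and $\Re(s)>1$, \[ \Phi_j(s)=\zeta(s)\,S^{(\gamma_1,\ldots,\gamma_{j-2})}_{f_1,\ldots,f_{j-2},F_j}(n_1,\ldots,n_{j-1}), \] where $F_j:=\delta^{-s}\bigl(G_j*_{\gamma_{j-1}}(\delta^sf_{j-1})\bigr)$ and $G_j:=S^{(\gamma_j,\ldots,\gamma_m)}_{f_j,\ldots,f_{m+1}}(\,\cdot\,,n_{j+1},\ldots,n_{m+1})$.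
   Context: An arithmetic function is a map $f:\mathbb{N}\to\mathbb{C}$, with $f(x)=0$ for $x\notin\mathbb{N}$; products $gh$ of arithmetic functions are pointwise, and $\delta^x(n):=n^x$ for $x\in\mathbb{C}$. $L(s;f)=\sum_{n\ge1}f(n)n^{-s}$, $\sigma(f)$ its abscissa of absolute convergence, $\zeta$ the Riemann zeta function. For $\gamma\in\mathbb{N}$ and arithmetic functions $g,h$, $(g*_\gamma h)(n):=\sum_{d\in\mathbb{N},\,d^\gamma\mid n}h(n/d^\gamma)\,g(d^\gamma)$. For $k\ge0$, $(\gamma_1,\ldots,\gamma_k)\in\mathbb{N}^k$ and arithmetic functions $g_1,\ldots,g_{k+1}$, \[ S^{(\gamma_1,\ldots,\gamma_k)}_{g_1,\ldots,g_{k+1}}(n_1,\ldots,n_{k+1}):=\sum_{\substack{(d_1,\ldots,d_k)\in\mathbb{N}^k\\ d_i^{\gamma_i}\mid\gcd(n_1,\ldots,n_{i+1})\ (1\le i\le k)}} g_1\Bigl(\frac{n_1}{d_1^{\gamma_1}}\Bigr)g_2\Bigl(\frac{d_1^{\gamma_1}}{d_2^{\gamma_2}}\Bigr)\cdots g_k\Bigl(\frac{d_{k-1}^{\gamma_{k-1}}}{d_k^{\gamma_k}}\Bigr)g_{k+1}\bigl(d_k^{\gamma_k}\bigr), \] with the convention that for $k=0$ (empty parameter list) $S_{g_1}(n_1)=g_1(n_1)$. In (i) and (ii), $G_j$ denotes the arithmetic function $x\mapsto S^{(\gamma_j,\ldots,\gamma_m)}_{f_j,\ldots,f_{m+1}}(x,n_{j+1},\ldots,n_{m+1})$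 (for $j=m+1$ this is $f_{m+1}$), and $F_j$ depends on $s$. *)

From Stdlib Require Import Reals List Arith.
From Coquelicot Require Import Coquelicot.
Import ListNotations.
Open Scope R_scope.

(* An arithmetic function N -> C (the value at 0 is never used). *)
Definition arith := nat -> C.

(* Complex power x^s := exp(s log x) for a real x > 0. *)
Definition cpow (x : R) (s : C) : C :=
  (exp (Re s * ln x) * cos (Im s * ln x), exp (Re s * ln x) * sin (Im s * ln x)).

Definition delta (s : C) : arith := fun n => cpow (INR n) s.

Definition dvdb (a b : nat) : bool := Nat.eqb (b mod a) 0.

Definition at_ratio (f : arith) (a b : nat) : C :=
  if dvdb b a then f (a / b)%nat else 0%R.

Definition sum_dvd (N : nat) (P : nat -> bool) (F : nat -> C) : C :=
  sum_n_m (fun d => if P d then F d else RtoC 0) 1 N.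

(* (g *_gam h)(n) = sum_{d in N, d^gam | n} h(n/d^gam) g(d^gam).
   For gam >= 1 and n >= 1, every such d satisfies d <= n. *)
Definition star (gam : nat) (g h : arith) : arith := fun n =>
  sum_dvd n (fun d => dvdb (Nat.pow d gam) n)
    (fun d => Cmult (at_ratio h n (Nat.pow d gam)) (g (Nat.pow d gam))).

(* Nested sum defining S.  G = gcd(n_1,...,n_i) so far, prev = n_1 or the
   previous d_{i-1}^{gam_{i-1}}. *)
Fixpoint Saux (gs : list nat) (fs : list arith) (ns : list nat)
  (G prev : nat) : C :=
  match gs, fs, ns with
  | [], [g], [] => g prev
  | gam :: gs', g :: fs', n :: ns' =>
      let G' := Nat.gcd G n in
      sum_dvd G' (fun d => dvdb (Nat.pow d gam) G')
        (fun d => Cmult (at_ratio g prev (Nat.pow d gam)) (Saux gs' fs' ns' G' (Nat.pow d gam)))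
  | _, _, _ => RtoC 0
  end.

(* Sfun = S^{(gam_1,...,gam_k)}_{g_1,...,g_{k+1}}(n_1,...,n_{k+1}) *)
Definition Sfun (gs : list nat) (fs : list arith) (ns : list nat) : C :=
  match ns with
  | n1 :: ns' => Saux gs fs ns' n1 n1
  | [] => RtoC 0
  end.

Definition sigma_abs (f : arith) : Rbar :=
  Glb_Rbar (fun x : R =>
    ex_series (fun k => Cmod (f (S k)) * Rpower (INR (S k)) (- x))).

From Stdlib Require Import Reals List Arith Lia Lra Classical.
From Coquelicot Require Import Coquelicot.
Import ListNotations.
Open Scope R_scope.

(* Only one level of the nested sum S sees the variable n_j: through the condition
   d^γ | n_j on the summation variable d = d_(j-1) (and, for j = 1, through the argument
   n_1 / d^γ of f_1).  That sum over d is finite, so it commutes with the series in n_j,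
   and the substitution n_j = d^γ m turns the inner series into d^(-γ s) ζ(s)
   (resp. d^(-γ s) L(s; f_1)).  The deeper levels only depend on the running gcd through
   divisibility by d^γ, which divides it anyway, so they collapse to G_j(d^γ); collecting
   the factors in d gives the convolution F_j. *)

Lemma cpow_mult x y s : 0 < x -> 0 < y ->
  cpow (x * y) s = Cmult (cpow x s) (cpow y s).
Proof.
  intros Hx Hy. unfold cpow, Cmult; simpl. rewrite ln_mult by assumption.
  rewrite !Rmult_plus_distr_l, exp_plus, cos_plus, sin_plus.
  f_equal; ring.
Qed.

Lemma cpow_opp_mult x s : Cmult (cpow x (Copp s)) (cpow x s) = RtoC 1.
Proof.
  unfold cpow, Cmult, RtoC.
  change (Re (Copp s)) with (- Re s). change (Im (Copp s)) with (- Im s).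
  rewrite !Ropp_mult_distr_l_reverse, cos_neg, sin_neg, exp_Ropp.
  set (a := Re s * ln x). set (b := Im s * ln x). simpl.
  assert (Hexp : exp a <> 0) by (apply Rgt_not_eq, exp_pos).
  assert (Hpyth := sin2_cos2 b). unfold Rsqr in Hpyth.
  f_equal; field_simplify; lra.
Qed.

Lemma Cmod_cpow x s : Cmod (cpow x s) = Rpower x (Re s).
Proof.
  unfold Cmod, cpow, Rpower. simpl.
  set (a := Re s * ln x). set (b := Im s * ln x).
  assert (Hpyth := sin2_cos2 b). unfold Rsqr in Hpyth.
  replace (_ + _) with (exp a * exp a) by nra.
  apply sqrt_square. left; apply exp_pos.
Qed.

Lemma delta_mult s a b : (1 <= a)%nat -> (1 <= b)%nat ->
  delta s (a * b)%nat = Cmult (delta s a) (delta s b).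
Proof.
  intros Ha Hb. unfold delta. rewrite mult_INR.
  apply cpow_mult; apply lt_0_INR; lia.
Qed.

Lemma delta_div s n D : (1 <= n)%nat -> Nat.divide D n ->
  delta s n = Cmult (delta s D) (delta s (n / D)%nat).
Proof.
  intros Hn [q ->]. assert (HD : D <> 0%nat) by lia.
  rewrite Nat.div_mul by exact HD. rewrite Nat.mul_comm, delta_mult by lia.
  reflexivity.
Qed.

Lemma delta_opp_div s n D : (1 <= n)%nat -> Nat.divide D n ->
  Cmult (delta (Copp s) n) (delta s (n / D)%nat) = delta (Copp s) D.
Proof.
  intros Hn HD. rewrite (delta_div (Copp s) n D Hn HD), <- Cmult_assoc.
  unfold delta at 2 3. rewrite cpow_opp_mult. ring.
Qed.

Lemma dvdbP a b : reflect (Nat.divide a b) (dvdb a b).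
Proof.
  unfold dvdb. apply Bool.iff_reflect. rewrite Nat.eqb_eq. symmetry.
  apply Nat.Lcm0.mod_divide.
Qed.

Lemma dvdb_pow_le d g n : (1 <= g)%nat -> (1 <= n)%nat ->
  dvdb (Nat.pow d g) n = true -> (d <= n)%nat.
Proof.
  intros Hg Hn Hdn. destruct (dvdbP (Nat.pow d g) n) as [Hdiv|]; [|discriminate].
  destruct d as [|d]; [lia|].
  apply Nat.le_trans with (Nat.pow (S d) g).
  - rewrite <- (Nat.pow_1_r (S d)) at 1. apply Nat.pow_le_mono_r; lia.
  - apply Nat.divide_pos_le; assumption.
Qed.

Lemma gcd_pos_l G n : (1 <= G)%nat -> (1 <= Nat.gcd G n)%nat.
Proof.
  intros HG. destruct (Nat.eq_dec (Nat.gcd G n) 0) as [E|E]; [|lia].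
  apply Nat.gcd_eq_0 in E. lia.
Qed.

Lemma dvdb_gcd_l D G n : Nat.divide D G -> dvdb D (Nat.gcd G n) = dvdb D n.
Proof.
  intros HDG. apply Bool.eq_iff_eq_true. rewrite <- !(Bool.reflect_iff _ _ (dvdbP _ _)).
  split; intros HD.
  - apply Nat.divide_trans with (Nat.gcd G n); [exact HD | apply Nat.gcd_divide_r].
  - apply Nat.gcd_greatest; assumption.
Qed.

Lemma sum_n_m_zero_tail (h : nat -> C) N M : (N <= M)%nat ->
  (forall d, (N < d)%nat -> h d = RtoC 0) -> sum_n_m h 1 N = sum_n_m h 1 M.
Proof.
  intros HNM Hz. induction M as [|M IH].
  - replace N with 0%nat by lia. reflexivity.
  - destruct (Nat.eq_dec N (S M)) as [->|HN]; [reflexivity|].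
    rewrite sum_n_Sm, <- IH, Hz by lia.
    symmetry. apply (plus_zero_r (G := C_AbelianMonoid)).
Qed.

Lemma sum_dvd_ext N1 (P1 : nat -> bool) (F1 : nat -> C) N2 (P2 : nat -> bool) (F2 : nat -> C) :
  (forall d, (1 <= d)%nat ->
     (if P1 d then F1 d else RtoC 0) = (if P2 d then F2 d else RtoC 0)) ->
  (forall d, P1 d = true -> (d <= N1)%nat) ->
  (forall d, P2 d = true -> (d <= N2)%nat) ->
  sum_dvd N1 P1 F1 = sum_dvd N2 P2 F2.
Proof.
  intros HF HN1 HN2. unfold sum_dvd.
  assert (Htail : forall N (P : nat -> bool) (F : nat -> C),
            (forall d, P d = true -> (d <= N)%nat) ->
            forall d, (N < d)%nat -> (if P d then F d else RtoC 0) = RtoC 0).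
  { intros N P F HN d Hd. destruct (P d) eqn:HP; [apply HN in HP; lia | reflexivity]. }
  rewrite (sum_n_m_zero_tail _ N1 (Nat.max N1 N2)), (sum_n_m_zero_tail _ N2 (Nat.max N1 N2));
    [| lia | now apply Htail | lia | now apply Htail].
  apply sum_n_m_ext_loc. intros d Hd. apply HF. lia.
Qed.

Lemma sum_dvd_mult_l N P F c :
  Cmult c (sum_dvd N P F) = sum_dvd N P (fun d => Cmult c (F d)).
Proof.
  unfold sum_dvd. rewrite <- (sum_n_m_mult_l (K := C_Ring)).
  apply sum_n_m_ext. intros d. destruct (P d); [reflexivity|].
  change (Cmult c (RtoC 0) = RtoC 0). ring.
Qed.

Lemma sum_dvd_mult_r N P F c :
  Cmult (sum_dvd N P F) c = sum_dvd N P (fun d => Cmult (F d) c).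
Proof.
  rewrite Cmult_comm, sum_dvd_mult_l.
  unfold sum_dvd. apply sum_n_m_ext. intros d. destruct (P d); [apply Cmult_comm | reflexivity].
Qed.

Lemma is_series_zero : is_series (fun _ : nat => RtoC 0) (RtoC 0).
Proof.
  apply (filterlim_ext (fun _ => RtoC 0)); [| apply filterlim_const].
  intros n. symmetry. apply (sum_n_m_const_zero (G := C_AbelianMonoid)).
Qed.

Lemma is_series_sum_dvd N P (u : nat -> nat -> C) (l : nat -> C) :
  (forall d, (1 <= d <= N)%nat -> P d = true -> is_series (u d) (l d)) ->
  is_series (fun k => sum_dvd N P (fun d => u d k)) (sum_dvd N P l).
Proof.
  unfold sum_dvd. induction N as [|N IH]; intros Hu.
  - rewrite sum_n_m_zero by lia.
    apply (is_series_ext (fun _ => RtoC 0)); [|exact is_series_zero].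
    intros k. rewrite sum_n_m_zero by lia. reflexivity.
  - rewrite sum_n_Sm by lia.
    apply (is_series_ext (fun k => plus (sum_n_m (fun d => if P d then u d k else RtoC 0) 1 N)
                                        (if P (S N) then u (S N) k else RtoC 0))).
    { intros k. rewrite sum_n_Sm by lia. reflexivity. }
    apply (is_series_plus (K := C_AbsRing) (V := C_NormedModule)).
    + apply IH. intros d Hd. apply Hu. lia.
    + destruct (P (S N)) eqn:HP; [apply Hu; auto; lia | exact is_series_zero].
Qed.

Lemma sum_n_m_div_succ (c : nat -> C) D n : (1 <= D)%nat ->
  sum_n_m c 1 (S n / D) =
  plus (sum_n_m c 1 (n / D)) (if dvdb D (S n) then c (S n / D)%nat else RtoC 0).
Proof.
  intros HD.
  pose proof (Nat.div_mod n D ltac:(lia)) as Hn.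
  pose proof (Nat.mod_bound_pos n D ltac:(lia) ltac:(lia)) as Hr.
  set (q := (n / D)%nat) in *. set (r := (n mod D)%nat) in *.
  destruct (Nat.eq_dec (S r) D) as [Hlast|Hlast].
  - assert (Hq : (S n / D)%nat = S q) by (symmetry; apply (Nat.div_unique _ _ _ 0); lia).
    destruct (dvdbP D (S n)) as [_|Hndiv]; [| elim Hndiv; exists (S q); lia].
    rewrite Hq, sum_n_Sm by lia. reflexivity.
  - assert (Hq : (S n / D)%nat = q) by (symmetry; apply (Nat.div_unique _ _ _ (S r)); lia).
    destruct (dvdbP D (S n)) as [[k Hk]|_].
    + assert (Hmod : (S n mod D)%nat = S r) by (symmetry; apply (Nat.mod_unique _ _ q); lia).
      rewrite Hk, Nat.Div0.mod_mul in Hmod. lia.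
    + rewrite Hq. symmetry. apply (plus_zero_r (G := C_AbelianMonoid)).
Qed.

Lemma sum_n_dilate (c : nat -> C) D N : (1 <= D)%nat ->
  sum_n (fun k => if dvdb D (S k) then c (S k / D)%nat else RtoC 0) N =
  sum_n_m c 1 (S N / D).
Proof.
  intros HD. induction N as [|N IH].
  - rewrite sum_O, sum_n_m_div_succ, Nat.Div0.div_0_l, sum_n_m_zero by lia.
    symmetry. apply (plus_zero_l (G := C_AbelianMonoid)).
  - rewrite sum_Sn, IH, (sum_n_m_div_succ c D (S N)) by exact HD. reflexivity.
Qed.

Lemma is_series_dilate (c : nat -> C) D L : (1 <= D)%nat ->
  is_series (fun n => c (S n)) L ->
  is_series (fun k => if dvdb D (S k) then c (S k / D)%nat else RtoC 0) L.
Proof.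
  intros HD Hc. unfold is_series in *.
  assert (Hpartial : filterlim (fun N => sum_n_m c 1 (S N)) eventually (locally L)).
  { apply (filterlim_ext (sum_n (fun n => c (S n)))); [|exact Hc].
    intros N. apply sum_n_m_S. }
  assert (Hindex : filterlim (fun N => (S N / D - 1)%nat) eventually eventually).
  { intros P [N0 HN0]. exists (D * (N0 + 1))%nat. intros N HN. apply HN0.
    assert (Hle : (D * (N0 + 1) / D <= S N / D)%nat) by (apply Nat.Div0.div_le_mono; lia).
    rewrite Nat.mul_comm, Nat.div_mul in Hle by lia. lia. }
  apply (filterlim_ext_loc (fun N => sum_n_m c 1 (S (S N / D - 1)))).
  - exists (D - 1)%nat. intros N HN. rewrite sum_n_dilate by exact HD.
    assert (Hpos : (1 <= S N / D)%nat).
    { rewrite <- (Nat.div_same D) at 1 by lia. apply Nat.Div0.div_le_mono. lia. }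
    f_equal. lia.
  - exact (filterlim_comp _ _ _ _ _ _ _ _ Hindex Hpartial).
Qed.

Lemma divide_pos p G : (1 <= G)%nat -> Nat.divide p G -> (1 <= p)%nat.
Proof. intros HG Hp. destruct p as [|p]; [apply Nat.divide_0_l in Hp|]; lia. Qed.

(* Stated relative to the gcd-irrelevance of the tail, so that it is both the induction
   step of [Saux_gcd_irrelevant] and, once that is proved, the unfolding rule [Saux_cons]. *)
Lemma Saux_cons_of_gcd_irrelevant g gs f fs n ns G prev N :
  (forall G' p, (1 <= G')%nat -> Nat.divide p G' -> Saux gs fs ns G' p = Saux gs fs ns p p) ->
  (1 <= g)%nat -> (1 <= G)%nat -> Nat.divide prev G -> (prev <= N)%nat ->
  Saux (g :: gs) (f :: fs) (n :: ns) G prev =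
  sum_dvd N (fun d => dvdb (Nat.pow d g) prev && dvdb (Nat.pow d g) n)%bool
    (fun d => Cmult (f (prev / Nat.pow d g)%nat) (Saux gs fs ns (Nat.pow d g) (Nat.pow d g))).
Proof.
  intros Hrest Hg HG Hprev HN. cbn [Saux]. apply sum_dvd_ext.
  - intros d _. unfold at_ratio.
    destruct (dvdbP (Nat.pow d g) prev) as [Hdp|_]; simpl.
    + assert (HdG : Nat.divide (Nat.pow d g) G) by (apply Nat.divide_trans with prev; assumption).
      rewrite dvdb_gcd_l by exact HdG.
      destruct (dvdbP (Nat.pow d g) n) as [Hdn|_]; [|reflexivity].
      rewrite Hrest; [reflexivity | apply gcd_pos_l, HG | apply Nat.gcd_greatest; assumption].
    + destruct (dvdb _ (Nat.gcd G n)); [ring | reflexivity].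
  - intros d. apply dvdb_pow_le; [exact Hg | apply gcd_pos_l, HG].
  - intros d Hd. apply andb_prop in Hd as [Hd _].
    apply Nat.le_trans with prev; [|exact HN].
    exact (dvdb_pow_le d g prev Hg (divide_pos prev G HG Hprev) Hd).
Qed.

Lemma Saux_gcd_irrelevant gs fs ns G prev :
  (forall g, In g gs -> (1 <= g)%nat) -> (1 <= G)%nat -> Nat.divide prev G ->
  Saux gs fs ns G prev = Saux gs fs ns prev prev.
Proof.
  revert fs ns G prev. induction gs as [|g gs IH]; intros fs ns G prev Hgs HG Hprev.
  - destruct fs as [|f [|]], ns; reflexivity.
  - destruct fs as [|f fs]; [reflexivity|]. destruct ns as [|n ns]; [reflexivity|].
    assert (Hrest : forall G' p, (1 <= G')%nat -> Nat.divide p G' ->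
                      Saux gs fs ns G' p = Saux gs fs ns p p).
    { intros G' p. apply IH. intros x Hx. apply Hgs. right. exact Hx. }
    assert (Hg : (1 <= g)%nat) by (apply Hgs; left; reflexivity).
    assert (Hprev_pos := divide_pos prev G HG Hprev).
    rewrite (Saux_cons_of_gcd_irrelevant g gs f fs n ns G prev prev),
            (Saux_cons_of_gcd_irrelevant g gs f fs n ns prev prev prev);
      auto using Nat.divide_refl.
Qed.

Lemma Saux_cons g gs f fs n ns G prev N :
  (1 <= g)%nat -> (forall x, In x gs -> (1 <= x)%nat) ->
  (1 <= G)%nat -> Nat.divide prev G -> (prev <= N)%nat ->
  Saux (g :: gs) (f :: fs) (n :: ns) G prev =
  sum_dvd N (fun d => dvdb (Nat.pow d g) prev && dvdb (Nat.pow d g) n)%bool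
    (fun d => Cmult (f (prev / Nat.pow d g)%nat) (Sfun gs fs (Nat.pow d g :: ns))).
Proof.
  intros Hg Hgs. apply Saux_cons_of_gcd_irrelevant; [|exact Hg].
  intros G' p. apply Saux_gcd_irrelevant, Hgs.
Qed.

Lemma delta_opp_star s g (G h H : arith) n :
  (1 <= g)%nat -> (1 <= n)%nat -> (forall y, H y = Cmult (delta s y) (h y)) ->
  Cmult (delta (Copp s) n) (star g G H n) =
  sum_dvd n (fun d => dvdb (Nat.pow d g) n)
    (fun d => Cmult (Cmult (h (n / Nat.pow d g)%nat) (G (Nat.pow d g)))
                    (delta (Copp s) (Nat.pow d g))).
Proof.
  intros Hg Hn HH. unfold star. rewrite sum_dvd_mult_l.
  apply sum_dvd_ext; [| intros d; apply dvdb_pow_le; assumption ..].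
  intros d _. unfold at_ratio. destruct (dvdbP (Nat.pow d g) n) as [Hd|]; [|reflexivity].
  rewrite HH, <- (delta_opp_div s n (Nat.pow d g) Hn Hd). ring.
Qed.

Lemma is_series_sum_dvd_dilate g N P (A c : nat -> C) L :
  (1 <= g)%nat -> is_series (fun n => c (S n)) L ->
  is_series (fun k => sum_dvd N P (fun d =>
               if dvdb (Nat.pow d g) (S k) then Cmult (A d) (c (S k / Nat.pow d g)%nat)
               else RtoC 0))
            (sum_dvd N P (fun d => Cmult (A d) L)).
Proof.
  intros Hg Hc. apply is_series_sum_dvd. intros d Hd _.
  apply (is_series_ext (fun k => scal (A d)
           (if dvdb (Nat.pow d g) (S k) then c (S k / Nat.pow d g)%nat else RtoC 0))).
  - intros k. destruct (dvdb (Nat.pow d g) (S k)); [reflexivity|].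
    change (Cmult (A d) (RtoC 0) = RtoC 0). ring.
  - apply (is_series_scal_l (K := C_AbsRing) (V := C_NormedModule)), is_series_dilate; [|exact Hc].
    assert (Nat.pow d g <> 0%nat) by (apply Nat.pow_nonzero; lia). lia.
Qed.

Lemma is_series_Sfun_vary_first s L g gs (f : arith) (fs : list arith) n post :
  (1 <= g)%nat -> (forall x, In x gs -> (1 <= x)%nat) -> (1 <= n)%nat ->
  is_series (fun k => Cmult (f (S k)) (delta (Copp s) (S k))) L ->
  is_series (fun k => Cmult (Sfun (g :: gs) (f :: fs) (S k :: n :: post)) (delta (Copp s) (S k)))
    (Cmult L (Cmult (delta (Copp s) n)
                    (star g (fun x => Sfun gs fs (x :: post)) (delta s) n))).
Proof.
  intros Hg Hgs Hn HL.
  set (G := fun x => Sfun gs fs (x :: post)).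
  set (A := fun d => Cmult (G (Nat.pow d g)) (delta (Copp s) (Nat.pow d g))).
  assert (Hseries := is_series_sum_dvd_dilate g n (fun d => dvdb (Nat.pow d g) n) A
                       (fun m => Cmult (f m) (delta (Copp s) m)) L Hg HL).
  replace (Cmult L _) with (sum_dvd n (fun d => dvdb (Nat.pow d g) n) (fun d => Cmult (A d) L)).
  - eapply is_series_ext; [|exact Hseries]. intros k. symmetry.
    cbn [Sfun]. rewrite (Saux_cons g gs f fs n post (S k) (S k) (S k)), sum_dvd_mult_r
      by auto using Nat.divide_refl with arith.
    apply sum_dvd_ext.
    + intros d _.
      destruct (dvdbP (Nat.pow d g) (S k)) as [Hdk|], (dvdbP (Nat.pow d g) n); cbn [andb];
        try reflexivity.
      rewrite (delta_div (Copp s) (S k) (Nat.pow d g)) by (auto with arith).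
      unfold A, G. ring.
    + intros d Hd. apply andb_prop in Hd as [Hd _].
      apply (dvdb_pow_le d g (S k) Hg); [lia | exact Hd].
    + intros d. apply dvdb_pow_le; assumption.
  - rewrite (delta_opp_star s g G (fun _ => RtoC 1) (delta s) n Hg Hn) by (intros; ring).
    rewrite sum_dvd_mult_l. apply sum_dvd_ext; [| intros d; apply dvdb_pow_le; assumption ..].
    intros d _. destruct (dvdb (Nat.pow d g) n); [|reflexivity]. unfold A. ring.
Qed.

Lemma is_series_Saux_vary_head s Z g gs (f : arith) (fs : list arith) post G prev :
  (1 <= g)%nat -> (forall x, In x gs -> (1 <= x)%nat) ->
  (1 <= G)%nat -> Nat.divide prev G ->
  is_series (fun k => delta (Copp s) (S k)) Z ->
  is_series (fun k => Cmult (Saux (g :: gs) (f :: fs) (S k :: post) G prev) (delta (Copp s) (S k)))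
    (Cmult Z (Cmult (delta (Copp s) prev)
       (star g (fun x => Sfun gs fs (x :: post)) (fun y => Cmult (delta s y) (f y)) prev))).
Proof.
  intros Hg Hgs HG Hprev HZ.
  assert (Hprev_pos := divide_pos prev G HG Hprev).
  set (Gj := fun x => Sfun gs fs (x :: post)).
  set (A := fun d => Cmult (Cmult (f (prev / Nat.pow d g)%nat) (Gj (Nat.pow d g)))
                           (delta (Copp s) (Nat.pow d g))).
  assert (Hseries := is_series_sum_dvd_dilate g prev (fun d => dvdb (Nat.pow d g) prev) A
                       (delta (Copp s)) Z Hg HZ).
  replace (Cmult Z _)
    with (sum_dvd prev (fun d => dvdb (Nat.pow d g) prev) (fun d => Cmult (A d) Z)).
  - eapply is_series_ext; [|exact Hseries]. intros k. symmetry.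
    rewrite (Saux_cons g gs f fs (S k) post G prev prev), sum_dvd_mult_r by auto.
    apply sum_dvd_ext.
    + intros d _. destruct (dvdbP (Nat.pow d g) prev), (dvdbP (Nat.pow d g) (S k)) as [Hdk|];
        cbn [andb]; try reflexivity.
      rewrite (delta_div (Copp s) (S k) (Nat.pow d g)) by (auto with arith).
      unfold A, Gj. ring.
    + intros d Hd. apply andb_prop in Hd as [Hd _]. exact (dvdb_pow_le d g prev Hg Hprev_pos Hd).
    + intros d. apply dvdb_pow_le; assumption.
  - rewrite (delta_opp_star s g Gj f (fun y => Cmult (delta s y) (f y)) prev Hg Hprev_pos)
      by reflexivity.
    rewrite sum_dvd_mult_l. apply sum_dvd_ext; [| intros d; apply dvdb_pow_le; assumption ..].
    intros d _. destruct (dvdb (Nat.pow d g) prev); [|reflexivity]. apply Cmult_comm.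
Qed.

Lemma is_series_Saux_vary_after s Z g gs2 (f : arith) (fs2 : list arith) post :
  (1 <= g)%nat -> (forall x, In x gs2 -> (1 <= x)%nat) ->
  is_series (fun k => delta (Copp s) (S k)) Z ->
  let F : arith := fun n => Cmult (delta (Copp s) n)
        (star g (fun x => Sfun gs2 fs2 (x :: post)) (fun y => Cmult (delta s y) (f y)) n) in
  forall pre gs1 fs1, length gs1 = length pre -> length fs1 = length pre ->
  forall G prev, (1 <= G)%nat -> Nat.divide prev G ->
  is_series (fun k => Cmult (Saux (gs1 ++ g :: gs2) (fs1 ++ f :: fs2) (pre ++ S k :: post) G prev)
                            (delta (Copp s) (S k)))
            (Cmult Z (Saux gs1 (fs1 ++ [F]) pre G prev)).
Proof.
  intros Hg Hgs2 HZ F pre.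
  induction pre as [|n pre IH]; intros gs1 fs1 Hlen_gs1 Hlen_fs1 G prev HG Hprev.
  - destruct gs1, fs1; try discriminate.
    exact (is_series_Saux_vary_head s Z g gs2 f fs2 post G prev Hg Hgs2 HG Hprev HZ).
  - destruct gs1 as [|g1 gs1], fs1 as [|f1 fs1]; try discriminate.
    injection Hlen_gs1 as Hlen_gs1. injection Hlen_fs1 as Hlen_fs1.
    cbn [app Saux]. rewrite sum_dvd_mult_l.
    apply (is_series_ext (fun k =>
       sum_dvd (Nat.gcd G n) (fun d => dvdb (Nat.pow d g1) (Nat.gcd G n))
       (fun d => Cmult (at_ratio f1 prev (Nat.pow d g1))
          (Cmult (Saux (gs1 ++ g :: gs2) (fs1 ++ f :: fs2) (pre ++ S k :: post)
                       (Nat.gcd G n) (Nat.pow d g1))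
                 (delta (Copp s) (S k)))))).
    { intros k. rewrite sum_dvd_mult_r. unfold sum_dvd. apply sum_n_m_ext. intros d.
      destruct (dvdb (Nat.pow d g1) (Nat.gcd G n)); [apply Cmult_assoc | reflexivity]. }
    apply is_series_sum_dvd. intros d _ Hd.
    replace (Cmult Z _) with (Cmult (at_ratio f1 prev (Nat.pow d g1))
        (Cmult Z (Saux gs1 (fs1 ++ [F]) pre (Nat.gcd G n) (Nat.pow d g1))))
      by ring.
    apply (is_series_scal_l (K := C_AbsRing) (V := C_NormedModule)).
    apply IH; [exact Hlen_gs1 | exact Hlen_fs1 | apply gcd_pos_l, HG |].
    destruct (dvdbP (Nat.pow d g1) (Nat.gcd G n)); [assumption | discriminate].
Qed.

Lemma firstn_nth_skipn {A} (l : list A) p d : (p < length l)%nat ->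
  l = firstn p l ++ nth p l d :: skipn (S p) l.
Proof.
  revert p. induction l as [|x l IH]; intros p Hp; [simpl in Hp; lia|].
  destruct p as [|p]; [reflexivity|]. simpl. f_equal. apply IH. simpl in Hp. lia.
Qed.

Lemma is_series_Sfun_vary_later s Z p gam (fs : list arith) n1 pre post :
  (forall g, In g gam -> (1 <= g)%nat) -> (p < length gam)%nat -> (p < length fs)%nat ->
  length pre = p -> (1 <= n1)%nat ->
  is_series (fun k => delta (Copp s) (S k)) Z ->
  is_series (fun k => Cmult (Sfun gam fs (n1 :: pre ++ S k :: post)) (delta (Copp s) (S k)))
    (Cmult Z (Sfun (firstn p gam)
       (firstn p fs ++ [fun n => Cmult (delta (Copp s) n)
          (star (nth p gam 0%nat) (fun x => Sfun (skipn (S p) gam) (skipn (S p) fs) (x :: post))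
                (fun y => Cmult (delta s y) (nth p fs (fun _ => RtoC 0) y)) n)])
       (n1 :: pre))).
Proof.
  intros Hgam Hp_gam Hp_fs Hlen_pre Hn1 HZ.
  assert (Hgam_split := firstn_nth_skipn gam p 0%nat Hp_gam).
  assert (Hfs_split := firstn_nth_skipn fs p (fun _ => RtoC 0) Hp_fs).
  assert (Hg : (1 <= nth p gam 0)%nat) by (apply Hgam, nth_In, Hp_gam).
  assert (Hgs2 : forall x, In x (skipn (S p) gam) -> (1 <= x)%nat).
  { intros x Hx. apply Hgam. rewrite <- (firstn_skipn (S p) gam).
    apply in_or_app. right. exact Hx. }
  assert (Hseries := is_series_Saux_vary_after s Z (nth p gam 0%nat) (skipn (S p) gam)
            (nth p fs (fun _ => RtoC 0)) (skipn (S p) fs) post Hg Hgs2 HZ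
            pre (firstn p gam) (firstn p fs)
            ltac:(rewrite length_firstn; lia) ltac:(rewrite length_firstn; lia)
            n1 n1 Hn1 (Nat.divide_refl n1)).
  rewrite <- Hgam_split, <- Hfs_split in Hseries.
  exact Hseries.
Qed.

Lemma ln_ge_1_sub_inv x : 0 < x -> 1 - / x <= ln x.
Proof.
  intros Hx. pose proof (exp_ineq1_le (- ln x)) as H.
  rewrite exp_Ropp, exp_ln in H by exact Hx. lra.
Qed.

Lemma Rpower_telescope t x : 0 < t -> 2 <= x ->
  t * Rpower x (- (t + 1)) <= Rpower (x - 1) (- t) - Rpower x (- t).
Proof.
  intros Ht Hx. set (E := Rpower x (- t)).
  assert (HE : 0 < E) by apply exp_pos.
  assert (Hsucc : Rpower x (- (t + 1)) = E * / x).
  { unfold E, Rpower. rewrite <- (exp_ln x) at 3 by lra. rewrite <- exp_Ropp, <- exp_plus.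
    f_equal. ring. }
  assert (Hpred : Rpower (x - 1) (- t) = E * exp (t * ln (x / (x - 1)))).
  { unfold E, Rpower. rewrite <- exp_plus, ln_div by lra. f_equal. ring. }
  assert (Hln : / x <= ln (x / (x - 1))).
  { eapply Rle_trans; [|apply ln_ge_1_sub_inv, Rdiv_lt_0_compat; lra].
    right. field. lra. }
  assert (Hexp := exp_ineq1_le (t * ln (x / (x - 1)))).
  rewrite Hsucc, Hpred.
  assert (t * / x <= t * ln (x / (x - 1))) by (apply Rmult_le_compat_l; lra).
  nra.
Qed.

Lemma ex_series_Rpower_opp sigma : 1 < sigma ->
  ex_series (fun k => Rpower (INR (S k)) (- sigma)).
Proof.
  intros Hsigma. set (t := sigma - 1). assert (Ht : 0 < t) by (unfold t; lra).
  set (b := fun k => Rpower (INR (S k)) (- sigma)).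
  assert (Hb_pos : forall k, 0 < b k) by (intros k; apply exp_pos).
  assert (Hbound : forall N, sum_n b N <= 1 + (1 - Rpower (INR (S N)) (- t)) / t).
  { induction N as [|N IH].
    - rewrite sum_O. unfold b, Rpower. simpl. rewrite ln_1, !Rmult_0_r, exp_0. lra.
    - rewrite sum_Sn. change (plus (sum_n b N) (b (S N))) with (sum_n b N + b (S N)).
      assert (Hx : 2 <= INR (S (S N))) by (rewrite !S_INR; pose proof (pos_INR N); lra).
      pose proof (Rpower_telescope t (INR (S (S N))) Ht Hx) as Htel.
      replace (INR (S (S N)) - 1) with (INR (S N)) in Htel by (rewrite (S_INR (S N)); ring).
      replace (- (t + 1)) with (- sigma) in Htel by (unfold t; ring).
      unfold b at 2.
      apply Rmult_le_compat_l with (r := / t) in Htel; [|left; apply Rinv_0_lt_compat, Ht].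
      unfold Rdiv in *. rewrite <- Rmult_assoc, Rinv_l in Htel by lra. lra. }
  destruct (ex_finite_lim_seq_incr (sum_n b) (1 + / t)) as [l Hl].
  - intros n. rewrite sum_Sn. specialize (Hb_pos (S n)). simpl. unfold plus. simpl. lra.
  - intros n. eapply Rle_trans; [apply Hbound|].
    assert (0 < Rpower (INR (S n)) (- t)) by apply exp_pos.
    unfold Rdiv. assert (0 < / t) by (apply Rinv_0_lt_compat, Ht). nra.
  - exists l. exact Hl.
Qed.

Lemma ex_series_zeta s : 1 < Re s -> exists Z, is_series (fun k => delta (Copp s) (S k)) Z.
Proof.
  intros Hs.
  apply (ex_series_le (K := C_AbsRing) (V := C_CompleteNormedModule) _
           (fun k => Rpower (INR (S k)) (- Re s))).
  - intros k. change (Cmod (cpow (INR (S k)) (Copp s)) <= Rpower (INR (S k)) (- Re s)).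
    rewrite Cmod_cpow. apply Rle_refl.
  - exact (ex_series_Rpower_opp (Re s) Hs).
Qed.

Lemma ex_series_L_of_sigma_abs (f : arith) s : Rbar_lt (sigma_abs f) (Finite (Re s)) ->
  exists L, is_series (fun k => Cmult (f (S k)) (delta (Copp s) (S k))) L.
Proof.
  intros Hs. unfold sigma_abs in Hs.
  set (E := fun x => ex_series (fun k => Cmod (f (S k)) * Rpower (INR (S k)) (- x))) in Hs.
  assert (Hx : exists x, E x /\ x < Re s).
  { apply NNPP. intros Hnone.
    assert (Hlb : is_lb_Rbar E (Finite (Re s))).
    { intros x Ex. simpl. apply Rnot_lt_le. intros Hlt. apply Hnone. exists x. split; assumption. }
    apply (Rbar_lt_not_le _ _ Hs), (Glb_Rbar_correct E), Hlb. }
  destruct Hx as [x [Ex Hxs]].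
  apply (ex_series_le (K := C_AbsRing) (V := C_CompleteNormedModule) _
           (fun k => Cmod (f (S k)) * Rpower (INR (S k)) (- x))); [|exact Ex].
  intros k. change (Cmod (Cmult (f (S k)) (cpow (INR (S k)) (Copp s))) <=
                    Cmod (f (S k)) * Rpower (INR (S k)) (- x)).
  rewrite Cmod_mult, Cmod_cpow. apply Rmult_le_compat_l; [apply Cmod_ge_0|].
  apply Rle_Rpower; [rewrite S_INR; pose proof (pos_INR k); lra |].
  change (Re (Copp s)) with (- Re s). lra.
Qed.

Theorem proposition3p1 (m : nat) (gam : list nat) (fs : list arith) :
  (1 <= m)%nat -> length gam = m -> (forall g, In g gam -> (1 <= g)%nat) ->
  length fs = (m + 1)%nat ->
  (* (i) *)
  (forall (post : list nat) (s : C),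
     length post = m -> (forall n, In n post -> (1 <= n)%nat) ->
     Rbar_lt (sigma_abs (nth 0 fs (fun _ => RtoC 0))) (Finite (Re s)) ->
     let f1 := nth 0 fs (fun _ => RtoC 0) in
     let G2 : arith := fun x => Sfun (skipn 1 gam) (skipn 1 fs) (x :: skipn 1 post) in
     let F1 : arith := fun n =>
       Cmult (delta (Copp s) n) (star (nth 0 gam 0%nat) G2 (delta s) n) in
     exists L : C,
       is_series (fun k => Cmult (f1 (S k)) (delta (Copp s) (S k))) L /\
       is_series (fun k => Cmult (Sfun gam fs (S k :: post))
                                 (delta (Copp s) (S k)))
                 (Cmult L (F1 (nth 0 post 0%nat)))) /\
  (* (ii) *)
  (forall (j : nat) (pre post : list nat) (s : C),
     (2 <= j <= m + 1)%nat ->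
     length pre = (j - 1)%nat -> length post = (m + 1 - j)%nat ->
     (forall n, In n pre -> (1 <= n)%nat) -> (forall n, In n post -> (1 <= n)%nat) ->
     1 < Re s ->
     let Gj : arith := fun x => Sfun (skipn (j - 1) gam) (skipn (j - 1) fs) (x :: post) in
     let fj1 := nth (j - 2) fs (fun _ => RtoC 0) in
     let Fj : arith := fun n =>
       Cmult (delta (Copp s) n)
             (star (nth (j - 2) gam 0%nat) Gj (fun y => Cmult (delta s y) (fj1 y)) n) in
     exists Z : C,
       is_series (fun k => delta (Copp s) (S k)) Z /\
       is_series (fun k => Cmult (Sfun gam fs (pre ++ S k :: post))
                                 (delta (Copp s) (S k)))
                 (Cmult Z (Sfun (firstn (j - 2) gam) (firstn (j - 2) fs ++ [Fj]) pre))).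
Proof.
  intros Hm Hlen_gam Hgam Hlen_fs. split.
  - intros post s Hlen_post Hpost Hsigma f1 G2 F1.
    destruct (ex_series_L_of_sigma_abs _ s Hsigma) as [L HL].
    exists L. split; [exact HL|].
    destruct gam as [|g gs]; [simpl in Hlen_gam; lia|].
    destruct fs as [|f fs]; [simpl in Hlen_fs; lia|].
    destruct post as [|n2 post]; [simpl in Hlen_post; lia|].
    exact (is_series_Sfun_vary_first s L g gs f fs n2 post (Hgam g (or_introl eq_refl))
             (fun x Hx => Hgam x (or_intror Hx)) (Hpost n2 (or_introl eq_refl)) HL).
  - intros j pre post s Hj Hlen_pre _ Hpre _ Hs Gj fj1 Fj.
    destruct (ex_series_zeta s Hs) as [Z HZ].
    exists Z. split; [exact HZ|].
    destruct j as [|[|p]]; [lia | lia |].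
    destruct pre as [|n1 pre]; [simpl in Hlen_pre; lia|].
    subst Gj fj1 Fj.
    replace (S (S p) - 2)%nat with p by lia. replace (S (S p) - 1)%nat with (S p) by lia.
    exact (is_series_Sfun_vary_later s Z p gam fs n1 pre post Hgam ltac:(lia) ltac:(lia)
             ltac:(simpl in Hlen_pre; lia) (Hpre n1 (or_introl eq_refl)) HZ).
Qed.
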